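(* For $n\geq1$ let $\ell_n=\sqrt[n]{n!}$ and $x_n=\log(\ell_{n+1}/\ell_n)$. Then for every integer $n\geq 2$, $$x_n\leq \frac1n-\frac{\log n}{2n(n+1)}-\frac{\log(2\pi)}{2n(n+1)}-\frac{83}{144n^3}+\frac{3}{2n^4},$$ and for every integer $n\geq3$, $$x_n\leq \frac1n-\frac{\log n}{2n(n+1)}-\frac{\log(2\pi)}{2n(n+1)}.$$
   Context: $\log$ denotes the natural logarithm. *)

From Stdlib Require Import Reals Arith Factorial.
Open Scope R_scope.

Definition ell (n : nat) : R := Rpower (INR (fact n)) (/ INR n).

Definition xseq (n : nat) : R := ln (ell (S n) / ell n).

(* Write d n = ln n! - (n + 1/2) ln n + n for the remainder in Stirling's
   formula. Since x_n = ln (n+1)! / (n+1) - ln n! / n, one finds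
     x_n = (n ln (1 + 1/n) - (ln n)/2 + n - d n) / (n (n+1)),
   and the two bounds follow from ln (1 + 1/n) <= 1/n - 1/(2n^2) + 1/(3n^3)
   and Robbins' lower bound d n >= ln(2 pi)/2 + 1/(12n + 1).
   Robbins' bound comes from two-sided estimates of the increments
   d n - d (n+1) = (n + 1/2) ln (1 + 1/n) - 1, which telescope, together with
   Wallis' inequality C(2n,n)^2 / 16^n <= 1/(pi n), which bounds 2 d n - d (2n)
   below by ln(2 pi)/2 and so pins down the limit of d. *)

From Stdlib Require Import Reals Lra Psatz Factorial.
From Coquelicot Require Import Coquelicot.
Open Scope R_scope.

Lemma nonneg_of_derive_nonneg (f f' : R -> R) (b : R) :
  0 <= b -> f 0 = 0 ->
  (forall c, 0 <= c <= b -> is_derive f c (f' c)) ->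
  (forall c, 0 <= c <= b -> 0 <= f' c) ->
  0 <= f b.
Proof.
  intros Hb Hf0 Hd Hpos. destruct (Req_dec b 0) as [->|Hb0]; [lra|].
  destruct (MVT_cor2 f f' 0 b ltac:(lra)) as [c [Hmvt Hc]].
  { intros c Hc. apply is_derive_Reals, Hd, Hc. }
  rewrite Hf0 in Hmvt. assert (0 <= f' c * (b - 0)) by (apply Rmult_le_pos; [apply Hpos|]; lra).
  lra.
Qed.

Lemma ln_1p_le (x : R) : 0 <= x -> ln (1 + x) <= x - x^2/2 + x^3/3.
Proof.
  intros Hx.
  set (f := fun y => y - y^2/2 + y^3/3 - ln (1 + y)).
  enough (0 <= f x) by (unfold f in *; lra).
  apply (nonneg_of_derive_nonneg f (fun y => y^3 / (1 + y))); unfold f; cbv beta; [lra| |..].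
  - rewrite Rplus_0_r, ln_1. lra.
  - intros c Hc. auto_derive; [lra|]. field. lra.
  - intros c Hc. apply Rdiv_le_0_compat; [apply pow_le|]; lra.
Qed.

Lemma ln_1p_sub_ln_1m_ge (t : R) : 0 <= t < 1 -> 2*t + 2*t^3/3 <= ln (1 + t) - ln (1 - t).
Proof.
  intros Ht.
  set (f := fun y => ln (1 + y) - ln (1 - y) - 2*y - 2*y^3/3).
  enough (0 <= f t) by (unfold f in *; lra).
  apply (nonneg_of_derive_nonneg f (fun y => 2*y^4 / (1 - y^2))); unfold f; cbv beta; [lra| |..].
  - rewrite Rplus_0_r, Rminus_0_r, ln_1. lra.
  - intros c Hc. auto_derive; [repeat split; lra|]. field. repeat split; try lra; nra.
  - intros c Hc. apply Rdiv_le_0_compat; [|nra].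
    assert (0 <= c^4) by (apply pow_le; lra). lra.
Qed.

Definition wallis_integral (k : nat) : R := RInt (fun x => sin x ^ k) 0 (PI/2).

Lemma ex_RInt_sin_pow (k : nat) : ex_RInt (fun x => sin x ^ k) 0 (PI/2).
Proof.
  apply (@ex_RInt_continuous R_CompleteNormedModule). intros z _.
  apply (@ex_derive_continuous R_AbsRing R_NormedModule). auto_derive. easy.
Qed.

Lemma wallis_integral_0 : wallis_integral 0 = PI/2.
Proof. unfold wallis_integral. simpl. rewrite RInt_const. compute -[PI Rminus Rmult]. lra. Qed.

Lemma wallis_integral_1 : wallis_integral 1 = 1.
Proof.
  unfold wallis_integral.
  rewrite (is_RInt_unique _ _ _ _
    (@is_RInt_derive R_CompleteNormedModule (fun x => - cos x) (fun x => sin x ^ 1) 0 (PI/2)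
       ltac:(intros x _; auto_derive; [easy | simpl; ring])
       ltac:(intros x _; apply (@ex_derive_continuous R_AbsRing R_NormedModule); auto_derive; easy))).
  simpl. rewrite cos_PI2, cos_0. unfold minus, plus, opp; simpl. lra.
Qed.

(* Integration by parts, in the form (sin^(k+1) cos)' = (k+1) sin^k - (k+2) sin^(k+2). *)
Lemma wallis_integral_rec (k : nat) :
  INR (S (S k)) * wallis_integral (S (S k)) = INR (S k) * wallis_integral k.
Proof.
  assert (Hd : forall x, is_derive (fun x => sin x ^ S k * cos x) x
                   (INR (S k) * sin x ^ k - INR (S (S k)) * sin x ^ S (S k))).
  { intros x. auto_derive; [easy|].
    change (match k with 0%nat => 1 | S _ => INR k + 1 end) with (INR (S k)).
    assert (Hcos : cos x * cos x = 1 - sin x * sin x)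
      by (generalize (sin2_cos2 x); unfold Rsqr; lra).
    rewrite !S_INR. simpl (sin x ^ S (S k)).
    transitivity ((INR k + 1) * sin x ^ k * (cos x * cos x) - sin x ^ k * sin x * sin x); [ring|].
    rewrite Hcos. ring. }
  assert (Hparts := @is_RInt_derive R_CompleteNormedModule _ _ 0 (PI/2) (fun x _ => Hd x)
     ltac:(intros x _; apply (@ex_derive_continuous R_AbsRing R_NormedModule); auto_derive; easy)).
  assert (Hlin : is_RInt (fun x => INR (S k) * sin x ^ k - INR (S (S k)) * sin x ^ S (S k)) 0 (PI/2)
                   (INR (S k) * wallis_integral k - INR (S (S k)) * wallis_integral (S (S k)))).
  { exact (@is_RInt_minus R_NormedModule _ _ _ _ _ _
      (@is_RInt_scal R_NormedModule _ _ _ _ _ (RInt_correct _ _ _ (ex_RInt_sin_pow k)))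
      (@is_RInt_scal R_NormedModule _ _ _ _ _ (RInt_correct _ _ _ (ex_RInt_sin_pow (S (S k)))))). }
  assert (E := is_RInt_unique _ _ _ _ Hparts). rewrite (is_RInt_unique _ _ _ _ Hlin) in E.
  cbv beta in E. rewrite cos_PI2, sin_0, pow_i in E by lia.
  unfold minus, plus, opp in E; cbn -[INR wallis_integral] in E. lra.
Qed.

Lemma wallis_integral_decr (k : nat) : wallis_integral (S k) <= wallis_integral k.
Proof.
  apply RInt_le; [generalize PI_RGT_0; lra | apply ex_RInt_sin_pow | apply ex_RInt_sin_pow |].
  intros x Hx. assert (H1 : 0 <= sin x) by (apply sin_ge_0; generalize PI_RGT_0; lra).
  assert (H2 := proj2 (SIN_bound x)). assert (H3 : 0 <= sin x ^ k) by (apply pow_le; lra).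
  simpl. nra.
Qed.

(* [C(2n, n) / 4^n], cf. [fact_double]. *)
Fixpoint central_binom_ratio (n : nat) : R :=
  match n with
  | 0%nat => 1
  | S m => central_binom_ratio m * (2 * INR m + 1) / (2 * INR m + 2)
  end.

Lemma central_binom_ratio_S (n : nat) : central_binom_ratio (S n) = central_binom_ratio n * (2 * INR n + 1) / (2 * INR n + 2).
Proof. reflexivity. Qed.

Lemma central_binom_ratio_pos (n : nat) : 0 < central_binom_ratio n.
Proof.
  induction n; simpl; [lra|]. assert (0 <= INR n) by apply pos_INR.
  apply Rdiv_lt_0_compat; [apply Rmult_lt_0_compat|]; lra.
Qed.

Lemma INR_double_S (n : nat) : INR (S (2 * n)) = 2 * INR n + 1.
Proof. rewrite S_INR, mult_INR. simpl. ring. Qed.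

Lemma INR_double_SS (n : nat) : INR (S (S (2 * n))) = 2 * INR n + 2.
Proof. rewrite !S_INR, mult_INR. simpl. ring. Qed.

Lemma wallis_integral_even (n : nat) : wallis_integral (2 * n) = PI / 2 * central_binom_ratio n.
Proof.
  induction n; [simpl; rewrite wallis_integral_0; lra|].
  replace (2 * S n)%nat with (S (S (2 * n))) by lia.
  assert (H := wallis_integral_rec (2 * n)). rewrite INR_double_SS, INR_double_S, IHn in H.
  assert (0 <= INR n) by apply pos_INR. rewrite central_binom_ratio_S.
  apply (Rmult_eq_reg_l (2 * INR n + 2)); [rewrite H; field|]; lra.
Qed.

Lemma wallis_integral_odd (n : nat) :
  wallis_integral (S (2 * n)) * central_binom_ratio (S n) * (2 * INR n + 2) = 1.
Proof.
  induction n; [simpl; rewrite wallis_integral_1; lra|].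
  replace (S (2 * S n)) with (S (S (S (2 * n)))) by lia.
  assert (Hrec := wallis_integral_rec (S (2 * n))).
  rewrite S_INR, INR_double_SS in Hrec.
  assert (0 <= INR n) by apply pos_INR.
  rewrite <- IHn, !central_binom_ratio_S, !S_INR.
  replace (wallis_integral (S (S (S (2 * n)))))
    with ((2 * INR n + 2) * wallis_integral (S (2 * n)) / (2 * INR n + 2 + 1))
    by (rewrite <- Hrec; field; lra).
  field. lra.
Qed.

(* Monotonicity of the Wallis integrals, between the indices 2n+1 and 2n+2. *)
Lemma wallis_ineq (n : nat) : (1 <= n)%nat -> PI * INR n * central_binom_ratio n ^ 2 <= 1.
Proof.
  intros Hn. destruct n as [|n]; [lia|].
  assert (Hdecr := wallis_integral_decr (S (2 * n))).
  replace (S (S (2 * n))) with (2 * S n)%nat in Hdecr by lia.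
  rewrite wallis_integral_even in Hdecr.
  assert (Hodd := wallis_integral_odd n). assert (Hc := central_binom_ratio_pos (S n)).
  set (c := central_binom_ratio (S n)) in *. clearbody c.
  assert (0 <= INR n) by apply pos_INR.
  assert (Hw : wallis_integral (S (2 * n)) = / (c * (2 * INR n + 2))).
  { apply (Rmult_eq_reg_r (c * (2 * INR n + 2))); [|nra].
    rewrite Rinv_l by nra. rewrite <- Hodd. ring. }
  rewrite Hw in Hdecr. rewrite S_INR.
  assert (Hscaled : PI / 2 * c * (c * (2 * INR n + 2))
                    <= / (c * (2 * INR n + 2)) * (c * (2 * INR n + 2)))
    by (apply Rmult_le_compat_r; nra).
  rewrite Rinv_l in Hscaled by nra. nra.
Qed.

Definition lnfact (n : nat) : R := ln (INR (fact n)).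

Definition stirling_rem (n : nat) : R := lnfact n - (INR n + /2) * ln (INR n) + INR n.

Lemma INR_fact_pos (n : nat) : 0 < INR (fact n).
Proof. apply lt_0_INR, lt_O_fact. Qed.

Lemma fact_double (n : nat) : central_binom_ratio n * 4 ^ n * INR (fact n) ^ 2 = INR (fact (2 * n)).
Proof.
  induction n; [simpl; lra|].
  replace (2 * S n)%nat with (S (S (2 * n))) by lia.
  rewrite (fact_simpl (S (2 * n))), (fact_simpl (2 * n)), (fact_simpl n), !mult_INR,
    INR_double_SS, INR_double_S, <- IHn.
  rewrite central_binom_ratio_S. rewrite S_INR. assert (0 <= INR n) by apply pos_INR. simpl. field. lra.
Qed.

Lemma lnfact_S (n : nat) : lnfact (S n) = ln (INR (S n)) + lnfact n.
Proof.
  unfold lnfact. rewrite fact_simpl, mult_INR, ln_mult; [reflexivity | |apply INR_fact_pos].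
  apply lt_0_INR; lia.
Qed.

Lemma lnfact_double (n : nat) :
  lnfact (2 * n) = ln (central_binom_ratio n) + 2 * INR n * ln 2 + 2 * lnfact n.
Proof.
  unfold lnfact. rewrite <- fact_double. assert (H1 := central_binom_ratio_pos n). assert (H2 := INR_fact_pos n).
  assert (0 < 4 ^ n) by (apply pow_lt; lra). assert (0 < INR (fact n) ^ 2) by (apply pow_lt; lra).
  rewrite !ln_mult, !ln_pow by (try apply Rmult_lt_0_compat; lra).
  replace 4 with (2 * 2) by lra. rewrite ln_mult by lra. simpl. ring.
Qed.

Lemma stirling_rem_double_ge (m : nat) :
  (1 <= m)%nat -> ln (2 * PI) / 2 <= 2 * stirling_rem m - stirling_rem (2 * m).
Proof.
  intros Hm. assert (W := wallis_ineq m Hm). assert (Hc := central_binom_ratio_pos m).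
  assert (HM : 0 < INR m) by (apply lt_0_INR; lia). assert (Hp := PI_RGT_0).
  assert (Hl : ln (PI * INR m * central_binom_ratio m ^ 2) <= 0).
  { rewrite <- ln_1. apply ln_le; [|exact W]. apply Rmult_lt_0_compat; [nra|apply pow_lt; lra]. }
  rewrite ln_mult, ln_mult, ln_pow in Hl by (try apply pow_lt; nra).
  unfold stirling_rem. rewrite lnfact_double, mult_INR, ln_mult, ln_mult by (simpl; lra).
  replace (INR 2) with 2 in * by (simpl; lra). lra.
Qed.

Lemma stirling_rem_step (n : nat) :
  stirling_rem n - stirling_rem (S n) = (INR n + /2) * (ln (INR n + 1) - ln (INR n)) - 1.
Proof. unfold stirling_rem. rewrite lnfact_S, S_INR. ring. Qed.

Lemma ln_1p_inv (N : R) : 0 < N -> ln (1 + / N) = ln (N + 1) - ln N.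
Proof. intros. rewrite <- ln_div by lra. f_equal. field. lra. Qed.

Lemma stirling_rem_step_le (n : nat) :
  (1 <= n)%nat -> stirling_rem n - stirling_rem (S n) <= / (2 * INR n) - / (2 * INR (S n)).
Proof.
  intros Hn. rewrite stirling_rem_step, S_INR. assert (HN : 1 <= INR n) by (apply (le_INR 1); lia).
  set (N := INR n) in *. set (x := / N).
  assert (Hx0 : 0 < x) by (apply Rinv_0_lt_compat; lra).
  assert (Hx1 : x <= 1) by (unfold x; rewrite <- Rinv_1; apply Rinv_le_contravar; lra).
  assert (Hln := ln_1p_le x ltac:(lra)). unfold x in Hln at 1. rewrite ln_1p_inv in Hln by lra.
  assert (Hmul : (N + /2) * (ln (N + 1) - ln N) <= (N + /2) * (x - x^2/2 + x^3/3))
    by (apply Rmult_le_compat_l; lra).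
  replace ((N + /2) * (x - x^2/2 + x^3/3)) with (1 + x^2/12 + x^3/6) in Hmul
    by (unfold x; field; lra).
  replace (/ (2 * N) - / (2 * (N + 1))) with (x^2 / (2 * (1 + x))) by (unfold x; field; lra).
  assert (0 <= x^2 * (5 - 3*x - 2*x^2) / (12 * (1 + x)))
    by (apply Rdiv_le_0_compat; [apply Rmult_le_pos|]; nra).
  replace (x^2 / (2 * (1 + x))) with (x^2/12 + x^3/6 + x^2 * (5 - 3*x - 2*x^2) / (12 * (1 + x)))
    by (field; lra).
  lra.
Qed.

(* With [t = 1/(2n+1)], [ln (1 + 1/n) = ln (1 + t) - ln (1 - t)]. *)
Lemma stirling_rem_step_ge (n : nat) :
  (1 <= n)%nat -> / (12 * INR n + 1) - / (12 * INR (S n) + 1) <= stirling_rem n - stirling_rem (S n).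
Proof.
  intros Hn. rewrite stirling_rem_step, S_INR. assert (HN : 1 <= INR n) by (apply (le_INR 1); lia).
  set (N := INR n) in *. set (t := / (2 * N + 1)).
  assert (Ht0 : 0 < t) by (apply Rinv_0_lt_compat; lra).
  assert (Ht1 : t < 1) by (unfold t; rewrite <- Rinv_1; apply Rinv_lt_contravar; lra).
  assert (Hln := ln_1p_sub_ln_1m_ge t ltac:(lra)).
  replace (1 + t) with (2 * (N + 1) * t) in Hln by (unfold t; field; lra).
  replace (1 - t) with (2 * N * t) in Hln by (unfold t; field; lra).
  rewrite !ln_mult in Hln by lra.
  assert (Hmul : (N + /2) * (2*t + 2*t^3/3) <= (N + /2) * (ln (N + 1) - ln N))
    by (apply Rmult_le_compat_l; lra).
  replace ((N + /2) * (2*t + 2*t^3/3)) with (1 + t^2/3) in Hmul by (unfold t; field; lra).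
  assert (0 <= (24*N - 23) / (3 * (2*N + 1)^2 * (12*N + 1) * (12*N + 13)))
    by (apply Rdiv_le_0_compat; [lra | repeat apply Rmult_lt_0_compat; nra]).
  replace (t^2/3) with (/ (12 * N + 1) - / (12 * (N + 1) + 1)
                        + (24*N - 23) / (3 * (2*N + 1)^2 * (12*N + 1) * (12*N + 13)))
    in Hmul by (unfold t; field; repeat split; lra).
  lra.
Qed.

Lemma telescope_le (f h : nat -> R) (m : nat) :
  (forall n, (m <= n)%nat -> f n - f (S n) <= h n - h (S n)) ->
  forall k, f m - f (m + k)%nat <= h m - h (m + k)%nat.
Proof.
  intros Hstep k. induction k as [|k IH]; [rewrite Nat.add_0_r; lra|].
  rewrite Nat.add_succ_r. assert (H := Hstep (m + k)%nat ltac:(lia)). lra.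
Qed.

Lemma le_of_forall_le_sub_inv (a b : R) (n : nat) :
  (forall m, (n <= m)%nat -> (1 <= m)%nat -> a - / INR m <= b) -> a <= b.
Proof.
  intros H. apply Rle_plus_epsilon. intros eps Heps.
  destruct (archimed_cor1 eps Heps) as [N [HN HN0]].
  assert (Hm := H (Nat.max n N) ltac:(lia) ltac:(lia)).
  assert (/ INR (Nat.max n N) <= / INR N).
  { apply Rinv_le_contravar; [apply lt_0_INR; lia | apply le_INR; lia]. }
  lra.
Qed.

(* Writing d for [stirling_rem], telescoping the step
   bounds gives [d n >= d m + 1/(12n+1) - 1/(12m+1)] for m >= n, and
   [d m >= ln(2 pi)/2 - 1/(4m)] by combining the upper step bound from m to 2m
   with [stirling_rem_double_ge]; then let m grow. *)
Lemma stirling_rem_ge (n : nat) :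
  (1 <= n)%nat -> ln (2 * PI) / 2 + / (12 * INR n + 1) <= stirling_rem n.
Proof.
  intros Hn. apply (le_of_forall_le_sub_inv _ _ n). intros m Hnm Hm.
  assert (HM : 1 <= INR m) by (apply (le_INR 1); lia).
  assert (Hlow := telescope_le (fun k => / (12 * INR k + 1)) stirling_rem n
                    (fun k Hk => stirling_rem_step_ge k ltac:(lia)) (m - n)).
  assert (Hup := telescope_le stirling_rem (fun k => / (2 * INR k)) m
                   (fun k Hk => stirling_rem_step_le k ltac:(lia)) m).
  assert (Hdouble := stirling_rem_double_ge m Hm).
  replace (n + (m - n))%nat with m in Hlow by lia.
  replace (m + m)%nat with (2 * m)%nat in Hup by lia.
  cbv beta in Hlow, Hup. rewrite mult_INR in Hup. replace (INR 2) with 2 in Hup by (simpl; lra).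
  assert (/ (12 * INR m + 1) <= / INR m / 2)
    by (unfold Rdiv; rewrite <- Rinv_mult; apply Rinv_le_contravar; lra).
  replace (/ (2 * INR m) - / (2 * (2 * INR m))) with (/ INR m / 4) in Hup by (field; lra).
  assert (0 < / INR m) by (apply Rinv_0_lt_compat; lra).
  lra.
Qed.

Lemma xseq_eq (n : nat) :
  (1 <= n)%nat ->
  xseq n = (INR n * ln (1 + / INR n) - ln (INR n) / 2 + INR n - stirling_rem n)
           / (INR n * (INR n + 1)).
Proof.
  intros Hn. assert (HN : 0 < INR n) by (apply lt_0_INR; lia).
  unfold xseq, ell, Rpower. rewrite ln_div, !ln_exp by apply exp_pos.
  fold (lnfact (S n)) (lnfact n). rewrite lnfact_S, S_INR, ln_1p_inv by lra.
  unfold stirling_rem. field. lra.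
Qed.

Definition xseq_bound (N : R) : R :=
  1 / N - ln N / (2 * N * (N + 1)) - ln (2 * PI) / (2 * N * (N + 1)).

Definition xseq_gap (N : R) : R :=
  (/ (2 * N) - / (3 * N ^ 2) + / (12 * N + 1)) / (N * (N + 1)).

Lemma xseq_le (n : nat) :
  (1 <= n)%nat ->
  xseq n <= xseq_bound (INR n) - xseq_gap (INR n).
Proof.
  intros Hn. assert (HN : 1 <= INR n) by (apply (le_INR 1); lia).
  rewrite xseq_eq by exact Hn. assert (Hrem := stirling_rem_ge n Hn).
  assert (Hln := ln_1p_le (/ INR n) ltac:(left; apply Rinv_0_lt_compat; lra)).
  unfold xseq_bound, xseq_gap. set (N := INR n) in *.
  assert (Hnum : N * ln (1 + / N) - ln N / 2 + N - stirling_rem n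
                 <= 1 - / (2 * N) + / (3 * N ^ 2) - ln N / 2 + N - ln (2 * PI) / 2 - / (12 * N + 1)).
  { assert (N * ln (1 + / N) <= N * (/ N - (/ N)^2/2 + (/ N)^3/3)) by (apply Rmult_le_compat_l; lra).
    replace (N * (/ N - (/ N)^2/2 + (/ N)^3/3)) with (1 - / (2 * N) + / (3 * N ^ 2)) in *
      by (field; lra).
    lra. }
  apply Rle_trans with ((1 - / (2 * N) + / (3 * N ^ 2) - ln N / 2 + N - ln (2 * PI) / 2
                         - / (12 * N + 1)) / (N * (N + 1))).
  - apply Rmult_le_compat_r; [left; apply Rinv_0_lt_compat; nra | exact Hnum].
  - right. field. lra.
Qed.

Lemma xseq_gap_ge (N : R) :
  1 <= N ->
  83 / (144 * N ^ 3) - 3 / (2 * N ^ 4) <= xseq_gap N.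
Proof.
  intros HN. unfold xseq_gap. set (x := / N).
  assert (Hx0 : 0 < x) by (apply Rinv_0_lt_compat; lra).
  assert (Hx1 : x <= 1) by (unfold x; rewrite <- Rinv_1; apply Rinv_le_contravar; lra).
  replace (83 / (144 * N ^ 3) - 3 / (2 * N ^ 4)) with (x^3 * (83/144 - 3/2 * x))
    by (unfold x; field; lra).
  replace ((/ (2 * N) - / (3 * N ^ 2) + / (12 * N + 1)) / (N * (N + 1)))
    with (x^3 * (7 - 7/2 * x - x^2/3) / ((1 + x) * (12 + x))) by (unfold x; field; lra).
  apply Rle_trans with (x^3 * ((83/144 - 3/2 * x) * ((1 + x) * (12 + x))) / ((1 + x) * (12 + x))).
  - right. field. lra.
  - apply Rmult_le_compat_r; [left; apply Rinv_0_lt_compat; nra|].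
    apply Rmult_le_compat_l; [apply pow_le; lra | nra].
Qed.

Lemma xseq_gap_nonneg (N : R) :
  1 <= N -> 0 <= xseq_gap N.
Proof.
  intros HN. unfold xseq_gap. apply Rdiv_le_0_compat; [|nra].
  assert (/ (3 * N ^ 2) <= / (2 * N)) by (apply Rinv_le_contravar; nra).
  assert (0 < / (12 * N + 1)) by (apply Rinv_0_lt_compat; lra).
  lra.
Qed.

Theorem mainTheorem6 :
  (forall n : nat, (2 <= n)%nat ->
     xseq n <= 1 / INR n
               - ln (INR n) / (2 * INR n * (INR n + 1))
               - ln (2 * PI) / (2 * INR n * (INR n + 1))
               - 83 / (144 * INR n ^ 3)
               + 3 / (2 * INR n ^ 4)) /\
  (forall n : nat, (3 <= n)%nat ->
     xseq n <= 1 / INR n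
               - ln (INR n) / (2 * INR n * (INR n + 1))
               - ln (2 * PI) / (2 * INR n * (INR n + 1))).
Proof.
  split; intros n Hn;
    assert (HN : 1 <= INR n) by (apply (le_INR 1); lia);
    assert (Hx := xseq_le n ltac:(lia)); unfold xseq_bound in Hx.
  - assert (Hgap := xseq_gap_ge (INR n) HN). lra.
  - assert (Hgap := xseq_gap_nonneg (INR n) HN). lra.
Qed.
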